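(* For every smooth closed plane curve parametrized by arc length with rotation number $n\ge1$, $4\pi^2\widetilde I_{-1}\le I_0$.
   Context: A closed plane curve is a smooth map $\vec f:\mathbb{R}/L\mathbb{Z}\to\mathbb{R}^2$ parametrized by arc length $s$, where $L>0$ is its length. $\vec\nu$ is $\partial_s\vec f$ rotated counterclockwise by $\pi/2$, $\kappa=\partial_s^2\vec f\cdot\vec\nu$, $n=\frac1{2\pi}\int_0^L\kappa\,ds$, $\tilde\kappa=\kappa-\frac1L\int_0^L\kappa\,ds$, $I_0=L\int_0^L\tilde\kappa^2\,ds$. Identifying $\mathbb{R}^2$ with $\mathbb{C}$, $f=f_1+if_2$, $\hat f(k)=L^{-1/2}\int_0^L f(s)e^{-2\pi i k s/L}\,ds$, and $\widetilde I_{-1}=\frac{4\pi^2}{L^3}\sum_{k\in\mathbb Z\setminus\{0\}}(k-n)^2|\hat f(k)|^2$. *)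

From Stdlib Require Import Reals Lra ClassicalEpsilon.
Open Scope R_scope.

(* Integral of f over [a,b]: the Riemann integral when f is Riemann integrable
   (the value does not depend on the integrability proof), 0 otherwise.
   All integrands below are continuous, hence integrable. *)
Definition Rint (f : R -> R) (a b : R) : R :=
  match excluded_middle_informative (inhabited (Riemann_integrable f a b)) with
  | left H => RiemannInt (epsilon H (fun _ => True))
  | right _ => 0
  end.

(* A closed curve f = (f1,f2) : R/LZ -> R^2, given as L-periodic maps R -> R,
   which is smooth (C^infty): D1 k, D2 k are the k-th derivatives of f1, f2. *)
Definition smooth_derivs (D : nat -> R -> R) : Prop :=
  forall k x, derivable_pt_lim (D k) x (D (S k) x).

(* Curvature: kappa = f'' . nu, nu = f' rotated by +pi/2 = (-f2', f1'). *)
Definition curvature (D1 D2 : nat -> R -> R) (s : R) : R :=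
  D1 2%nat s * (- D2 1%nat s) + D2 2%nat s * D1 1%nat s.

Definition rot_number (D1 D2 : nat -> R -> R) (L : R) : R :=
  / (2 * PI) * Rint (curvature D1 D2) 0 L.

Definition I0 (D1 D2 : nat -> R -> R) (L : R) : R :=
  let m := / L * Rint (curvature D1 D2) 0 L in
  L * Rint (fun s => (curvature D1 D2 s - m) ^ 2) 0 L.

(* Real and imaginary parts of hat f(k) = L^{-1/2} int_0^L (f1 + i f2) e^{-2 pi i k s/L} ds. *)
Definition fhat_re (f1 f2 : R -> R) (L : R) (k : Z) : R :=
  / sqrt L * Rint (fun s => f1 s * cos (2 * PI * IZR k * s / L)
                           + f2 s * sin (2 * PI * IZR k * s / L)) 0 L.
Definition fhat_im (f1 f2 : R -> R) (L : R) (k : Z) : R :=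
  / sqrt L * Rint (fun s => f2 s * cos (2 * PI * IZR k * s / L)
                           - f1 s * sin (2 * PI * IZR k * s / L)) 0 L.

Definition fhat_norm2 (f1 f2 : R -> R) (L : R) (k : Z) : R :=
  fhat_re f1 f2 L k ^ 2 + fhat_im f1 f2 L k ^ 2.

(* Partial sums of tilde I_{-1} = (4 pi^2 / L^3) sum_{k in Z\{0}} (k-n)^2 |hat f(k)|^2,
   over 0 < |k| <= N. *)
Definition Itm1_partial (f1 f2 : R -> R) (L n : R) (N : nat) : R :=
  4 * PI ^ 2 / L ^ 3 *
  sum_f_R0 (fun j =>
     let k := Z.of_nat (S j) in
     (IZR k - n) ^ 2 * fhat_norm2 f1 f2 L k
     + (IZR (- k) - n) ^ 2 * fhat_norm2 f1 f2 L (- k)) N.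

From Stdlib Require Import Reals Lra Lia ZArith List.
From Coquelicot Require Import Coquelicot.
Import ListNotations.
Open Scope R_scope.

(* Let c = 2 pi n / L be the mean curvature and h = f'' - c nu.  Since f'' = kappa nu with
   |nu| = 1, |h| = |kappa - c| and I_0 = L int |h|^2.  Integrating by parts twice, the Fourier
   coefficient of h at frequency k is (4 pi^2 / L^2) k (n - k) hat f(k), so Bessel's inequality
   for the orthogonal system e^{2 pi i k s / L} gives
   (16 pi^4 / L^3) sum_k k^2 (k - n)^2 |hat f(k)|^2 <= I_0.  For k <> 0 the weight k^2 (k - n)^2
   dominates (k - n)^2, so 4 pi^2 times every partial sum of tilde I_{-1} is at most I_0; these
   partial sums increase, hence converge to a limit obeying the same bound. *)

Lemma Rint_RInt (f : R -> R) (a b : R) : ex_RInt f a b -> Rint f a b = RInt f a b.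
Proof.
  intros H. unfold Rint.
  destruct (ClassicalEpsilon.excluded_middle_informative _) as [i | n].
  - symmetry; apply RInt_Reals.
  - exfalso; apply n; constructor; apply ex_RInt_Reals_0; exact H.
Qed.

(* Coquelicot's continuity lemmas are stated for [plus]/[mult] of a generic module; these
   restatements with [Rplus]/[Rmult] let [solve_continuous] apply them by matching. *)
Section ContinuityR.

Variables (f g : R -> R) (x : R).
Hypotheses (cf : continuous f x) (cg : continuous g x).

Lemma continuousR_plus : continuous (fun y => f y + g y) x.
Proof. exact (continuous_plus f g x cf cg). Qed.

Lemma continuousR_mult : continuous (fun y => f y * g y) x.
Proof. exact (continuous_mult f g x cf cg). Qed.

Lemma continuousR_opp : continuous (fun y => - f y) x.
Proof. exact (continuous_opp f x cf). Qed.

Lemma continuousR_minus : continuous (fun y => f y - g y) x.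
Proof. exact (continuous_plus f (fun y => - g y) x cf (continuous_opp g x cg)). Qed.

Lemma continuousR_div_const (c : R) : continuous (fun y => f y / c) x.
Proof. exact (continuous_mult f (fun _ => / c) x cf (continuous_const _ _)). Qed.

Lemma continuousR_pow (m : nat) : continuous (fun y => f y ^ m) x.
Proof.
  induction m as [| m IH]; simpl.
  - apply continuous_const.
  - exact (continuous_mult f (fun y => f y ^ m) x cf IH).
Qed.

Lemma continuousR_cos : continuous (fun y => cos (f y)) x.
Proof. apply continuous_cos_comp, cf. Qed.

Lemma continuousR_sin : continuous (fun y => sin (f y)) x.
Proof. apply (continuous_comp f sin); [exact cf | apply continuity_pt_filterlim, continuity_sin]. Qed.

End ContinuityR.

Ltac solve_continuous :=
  lazymatch goal with
  | |- continuous (fun _ => ?c) _ => apply continuous_const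
  | |- continuous (fun y => y) _ => apply continuous_id
  | |- continuous (fun y => _ + _) _ => apply continuousR_plus; solve_continuous
  | |- continuous (fun y => _ - _) _ => apply continuousR_minus; solve_continuous
  | |- continuous (fun y => _ * _) _ => apply continuousR_mult; solve_continuous
  | |- continuous (fun y => _ / _) _ => apply continuousR_div_const; solve_continuous
  | |- continuous (fun y => - _) _ => apply continuousR_opp; solve_continuous
  | |- continuous (fun y => _ ^ _) _ => apply continuousR_pow; solve_continuous
  | |- continuous (fun y => cos _) _ => apply continuousR_cos; solve_continuous
  | |- continuous (fun y => sin _) _ => apply continuousR_sin; solve_continuous
  | |- continuous (Rmult ?a) _ =>
      apply (continuousR_mult (fun _ => a) (fun y => y)); solve_continuous
  | |- continuous (Rplus ?a) _ =>
      apply (continuousR_plus (fun _ => a) (fun y => y)); solve_continuous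
  | |- continuous _ _ => solve [eauto]
  end.

Lemma ex_RInt_continuousR (f : R -> R) (a b : R) :
  (forall x, continuous f x) -> ex_RInt f a b.
Proof. intros; apply (ex_RInt_continuous (V := R_CompleteNormedModule)); auto. Qed.

Ltac solve_ex_RInt := apply ex_RInt_continuousR; intros; solve_continuous.

Lemma RInt_plus_scal (f g : R -> R) (a b k : R) : ex_RInt f a b -> ex_RInt g a b ->
  RInt (fun x => f x + k * g x) a b = RInt f a b + k * RInt g a b.
Proof.
  intros Hf Hg.
  transitivity (plus (RInt f a b) (RInt (fun x => scal k (g x)) a b)).
  - apply (RInt_plus (V := R_CompleteNormedModule)); auto.
    apply (ex_RInt_scal (V := R_CompleteNormedModule)); auto.
  - rewrite (RInt_scal (V := R_CompleteNormedModule)); auto.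
Qed.

Lemma RInt_extR (f g : R -> R) (a b : R) : (forall x, f x = g x) -> RInt f a b = RInt g a b.
Proof. intros; apply RInt_ext; auto. Qed.

Lemma RInt_constR (a b c : R) : RInt (fun _ => c) a b = (b - a) * c.
Proof. exact (RInt_const (V := R_CompleteNormedModule) a b c). Qed.

Lemma RInt_derive_continuous (F f : R -> R) (a b : R) :
  (forall x, is_derive F x (f x)) -> (forall x, continuous f x) ->
  RInt f a b = F b - F a.
Proof.
  intros dF cf. apply (is_RInt_unique (V := R_CompleteNormedModule)).
  apply (is_RInt_derive (V := R_CompleteNormedModule) F f); auto.
Qed.

Lemma sin_period_Z (x : R) (k : Z) : sin (x + 2 * IZR k * PI) = sin x.
Proof.
  destruct (Z_le_gt_dec 0 k).
  - replace k with (Z.of_nat (Z.to_nat k)) by lia. rewrite <- INR_IZR_INZ. apply sin_period.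
  - replace k with (- Z.of_nat (Z.to_nat (- k)))%Z by lia.
    rewrite opp_IZR, <- INR_IZR_INZ, <- (sin_period _ (Z.to_nat (- k))).
    f_equal; ring.
Qed.

Lemma cos_period_Z (x : R) (k : Z) : cos (x + 2 * IZR k * PI) = cos x.
Proof.
  rewrite !cos_sin, <- (sin_period_Z (PI / 2 + x) k). f_equal; ring.
Qed.

Lemma cos_plus_PI2 (x : R) : cos (x + PI / 2) = - sin x.
Proof. rewrite cos_plus, cos_PI2, sin_PI2; ring. Qed.

Lemma sin_plus_PI2 (x : R) : sin (x + PI / 2) = cos x.
Proof. rewrite sin_plus, cos_PI2, sin_PI2; ring. Qed.

Lemma RInt_cos_affine_period (L a b : R) (d : Z) : a <> 0 -> a * L = 2 * IZR d * PI ->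
  RInt (fun s => cos (a * s + b)) 0 L = 0.
Proof.
  intros Ha HaL.
  rewrite (RInt_derive_continuous (fun s => sin (a * s + b) / a)).
  - replace (a * L + b) with (b + 2 * IZR d * PI) by lra.
    rewrite sin_period_Z, Rmult_0_r, Rplus_0_l. apply Rminus_diag.
  - intros x. auto_derive; auto. field; auto.
  - intros; solve_continuous.
Qed.

Section InnerProduct.

Variable L : R.

Definition ip (u1 u2 v1 v2 : R -> R) : R := RInt (fun s => u1 s * v1 s + u2 s * v2 s) 0 L.

Lemma ip_comm (u1 u2 v1 v2 : R -> R) : ip u1 u2 v1 v2 = ip v1 v2 u1 u2.
Proof. apply RInt_extR; intros; ring. Qed.

Variables (u1 u2 v1 v2 w1 w2 : R -> R).
Hypotheses (cu1 : forall x, continuous u1 x) (cu2 : forall x, continuous u2 x)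
  (cv1 : forall x, continuous v1 x) (cv2 : forall x, continuous v2 x)
  (cw1 : forall x, continuous w1 x) (cw2 : forall x, continuous w2 x).

Lemma ip_sub_l (k : R) :
  ip (fun s => u1 s - k * w1 s) (fun s => u2 s - k * w2 s) v1 v2
  = ip u1 u2 v1 v2 - k * ip w1 w2 v1 v2.
Proof.
  unfold ip.
  rewrite (RInt_extR _ (fun s => (u1 s * v1 s + u2 s * v2 s) + (- k) * (w1 s * v1 s + w2 s * v2 s)))
    by (intros; ring).
  rewrite RInt_plus_scal by solve_ex_RInt. ring.
Qed.

Lemma ip_sub_r (k : R) :
  ip v1 v2 (fun s => u1 s - k * w1 s) (fun s => u2 s - k * w2 s)
  = ip v1 v2 u1 u2 - k * ip v1 v2 w1 w2.
Proof. rewrite !(ip_comm v1 v2). apply ip_sub_l. Qed.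

Lemma ip_self_nonneg : 0 <= L -> 0 <= ip u1 u2 u1 u2.
Proof. intros hL. apply RInt_ge_0; [exact hL | solve_ex_RInt | intros; nra]. Qed.

End InnerProduct.

Definition wave_c (w f s : R) : R := cos (w * s + f).
Definition wave_s (w f s : R) : R := sin (w * s + f).

Lemma continuous_wave_c (w f x : R) : continuous (wave_c w f) x.
Proof. unfold wave_c; solve_continuous. Qed.

Lemma continuous_wave_s (w f x : R) : continuous (wave_s w f) x.
Proof. unfold wave_s; solve_continuous. Qed.

#[export] Hint Resolve continuous_wave_c continuous_wave_s : core.

(* For f = 0 and f = PI / 2, [fcoef L u1 u2 w f] is the real, resp. imaginary, part of
   int_0^L (u1 + i u2) e^{-i w s} ds. *)
Definition fcoef (L : R) (u1 u2 : R -> R) (w f : R) : R := ip L u1 u2 (wave_c w f) (wave_s w f).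

Lemma ip_waves (L w f w' f' : R) :
  ip L (wave_c w f) (wave_s w f) (wave_c w' f') (wave_s w' f')
  = RInt (fun s => cos ((w - w') * s + (f - f'))) 0 L.
Proof.
  apply RInt_extR; intros s. unfold wave_c, wave_s.
  replace ((w - w') * s + (f - f')) with ((w * s + f) - (w' * s + f')) by ring.
  rewrite cos_minus; ring.
Qed.

Lemma ip_wave_self (L w f : R) : ip L (wave_c w f) (wave_s w f) (wave_c w f) (wave_s w f) = L.
Proof.
  rewrite ip_waves, (RInt_extR _ (fun _ => 1)), RInt_constR; [ring |].
  intros; replace ((w - w) * x + (f - f)) with 0 by ring. apply cos_0.
Qed.

Section Bessel.

Variables (L : R) (I : Type) (w ph : I -> R) (h1 h2 : R -> R).
Hypotheses (hL : 0 < L)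
  (ch1 : forall x, continuous h1 x) (ch2 : forall x, continuous h2 x)
  (orth : forall i j, i <> j ->
     ip L (wave_c (w i) (ph i)) (wave_s (w i) (ph i)) (wave_c (w j) (ph j)) (wave_s (w j) (ph j)) = 0).

Definition coef (i : I) : R := fcoef L h1 h2 (w i) (ph i).

(* h minus its orthogonal projection on the waves indexed by l, each of squared norm L. *)
Fixpoint resid1 (l : list I) : R -> R :=
  match l with
  | [] => h1
  | i :: l' => fun s => resid1 l' s - coef i / L * wave_c (w i) (ph i) s
  end.

Fixpoint resid2 (l : list I) : R -> R :=
  match l with
  | [] => h2
  | i :: l' => fun s => resid2 l' s - coef i / L * wave_s (w i) (ph i) s
  end.

Definition sum_sq_coef (l : list I) : R := fold_right (fun i acc => coef i ^ 2 + acc) 0 l.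

Lemma continuous_resid (l : list I) (x : R) :
  continuous (resid1 l) x /\ continuous (resid2 l) x.
Proof.
  revert x; induction l as [| i l IH]; intros x; simpl; [auto |].
  destruct (IH x); split; solve_continuous.
Qed.

Lemma ip_resid_wave (l : list I) (i : I) : ~ In i l ->
  fcoef L (resid1 l) (resid2 l) (w i) (ph i) = coef i.
Proof.
  induction l as [| j l IH]; intros Hi; [reflexivity |].
  simpl in Hi. unfold fcoef; simpl.
  rewrite ip_sub_l by (auto; apply continuous_resid).
  unfold fcoef in IH; rewrite IH, orth by tauto. ring.
Qed.

Lemma ip_resid_self (l : list I) : NoDup l ->
  ip L (resid1 l) (resid2 l) (resid1 l) (resid2 l) = ip L h1 h2 h1 h2 - sum_sq_coef l / L.
Proof.
  induction l as [| i l IH]; intros Hl; simpl.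
  - unfold Rdiv; ring.
  - apply NoDup_cons_iff in Hl as [Hi Hl].
    assert (c1 : forall x, continuous (resid1 l) x) by apply continuous_resid.
    assert (c2 : forall x, continuous (resid2 l) x) by apply continuous_resid.
    rewrite ip_sub_l, !ip_sub_r by (intros; solve_continuous).
    rewrite IH by exact Hl. rewrite (ip_comm L (wave_c _ _)).
    fold (fcoef L (resid1 l) (resid2 l) (w i) (ph i)).
    rewrite ip_resid_wave, ip_wave_self by exact Hi.
    field; lra.
Qed.

Lemma bessel_inequality (l : list I) : NoDup l -> sum_sq_coef l <= L * ip L h1 h2 h1 h2.
Proof.
  intros Hl.
  pose proof (ip_self_nonneg L (resid1 l) (resid2 l) (fun x => proj1 (continuous_resid l x))
    (fun x => proj2 (continuous_resid l x)) (Rlt_le _ _ hL)) as H.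
  rewrite ip_resid_self in H by exact Hl.
  apply Rmult_le_compat_l with (r := L) in H; [| lra].
  replace (L * (ip L h1 h2 h1 h2 - sum_sq_coef l / L)) with
    (L * ip L h1 h2 h1 h2 - sum_sq_coef l) in H by (field; lra).
  lra.
Qed.

End Bessel.

Lemma fcoef_shift_PI (L : R) (u1 u2 : R -> R) (w f : R) :
  (forall x, continuous u1 x) -> (forall x, continuous u2 x) ->
  fcoef L u1 u2 w (f + PI) = - fcoef L u1 u2 w f.
Proof.
  intros c1 c2. unfold fcoef, ip.
  rewrite (RInt_extR _ (fun s => 0 + (-1) * (u1 s * wave_c w f s + u2 s * wave_s w f s))).
  - rewrite RInt_plus_scal, RInt_constR by solve_ex_RInt. ring.
  - intros s. unfold wave_c, wave_s. rewrite <- Rplus_assoc, neg_cos, neg_sin. ring.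
Qed.

Lemma fcoef_derive (L : R) (u1 u2 v1 v2 : R -> R) (w f : R) (k : Z) :
  (forall x, is_derive u1 x (v1 x)) -> (forall x, is_derive u2 x (v2 x)) ->
  (forall x, continuous v1 x) -> (forall x, continuous v2 x) ->
  u1 L = u1 0 -> u2 L = u2 0 -> w * L = 2 * IZR k * PI ->
  fcoef L v1 v2 w f = - w * fcoef L u1 u2 w (f + PI / 2).
Proof.
  intros d1 d2 cv1 cv2 p1 p2 hw.
  assert (cu1 : forall x, continuous u1 x)
    by (intros; apply (ex_derive_continuous (V := R_NormedModule)); eexists; apply d1).
  assert (cu2 : forall x, continuous u2 x)
    by (intros; apply (ex_derive_continuous (V := R_NormedModule)); eexists; apply d2).
  set (F s := u1 s * wave_c w f s + u2 s * wave_s w f s).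
  assert (dF : forall x, is_derive F x ((v1 x * wave_c w f x + v2 x * wave_s w f x)
             + w * (u1 x * wave_c w (f + PI / 2) x + u2 x * wave_s w (f + PI / 2) x))).
  { intros x. unfold F, wave_c, wave_s. auto_derive.
    - repeat split; eexists; [apply d1 | apply d2].
    - replace (Derive (fun y : R => u1 y) x) with (v1 x) by (symmetry; apply is_derive_unique, d1).
      replace (Derive (fun y : R => u2 y) x) with (v2 x) by (symmetry; apply is_derive_unique, d2).
      replace (w * x + (f + PI / 2)) with (w * x + f + PI / 2) by ring.
      rewrite cos_plus_PI2, sin_plus_PI2. ring. }
  pose proof (RInt_derive_continuous F _ 0 L dF ltac:(intros; solve_continuous)) as H.
  rewrite RInt_plus_scal in H by solve_ex_RInt.
  assert (F L = F 0) as FL.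
  { unfold F, wave_c, wave_s. rewrite p1, p2, hw, <- (Rplus_comm f), cos_period_Z, sin_period_Z.
    rewrite Rmult_0_r, Rplus_0_l. reflexivity. }
  unfold fcoef, ip. rewrite FL, Rminus_diag in H. lra.
Qed.

Lemma is_derive_smooth (D : nat -> R -> R) (k : nat) (x : R) :
  smooth_derivs D -> is_derive (D k) x (D (S k) x).
Proof. intros H; apply is_derive_Reals, H. Qed.

Lemma Derive_smooth (D : nat -> R -> R) (k : nat) (x : R) :
  smooth_derivs D -> Derive (fun y : R => D k y) x = D (S k) x.
Proof. intros H; apply is_derive_unique, is_derive_smooth, H. Qed.

Lemma continuous_smooth (D : nat -> R -> R) (k : nat) (x : R) :
  smooth_derivs D -> continuous (D k) x.
Proof.
  intros H. apply (ex_derive_continuous (V := R_NormedModule)).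
  eexists; apply is_derive_smooth, H.
Qed.

Lemma smooth_periodic (D : nat -> R -> R) (L : R) :
  smooth_derivs D -> (forall s, D 0%nat (s + L) = D 0%nat s) ->
  forall k s, D k (s + L) = D k s.
Proof.
  intros hs hp k; induction k as [| k IH]; intros s; [apply hp |].
  assert (Hd : is_derive (D k) s (D (S k) (s + L))).
  { apply (is_derive_ext (fun x => D k (x + L))); [intros; apply IH |].
    auto_derive.
    - eexists; apply is_derive_smooth, hs.
    - rewrite Derive_smooth by exact hs. ring. }
  rewrite <- (is_derive_unique _ _ _ Hd). apply is_derive_unique, is_derive_smooth, hs.
Qed.

(* The mode (k, b) is the wave e^{2 pi i k s / L} for b = false and i e^{2 pi i k s / L} for
   b = true, viewed in R^2. *)
Definition mode_freq (L : R) (k : Z) : R := 2 * PI * IZR k / L.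
Definition mode_phase (b : bool) : R := if b then PI / 2 else 0.

Lemma modes_orthogonal (L : R) : 0 < L -> forall i j : Z * bool, i <> j ->
  ip L (wave_c (mode_freq L (fst i)) (mode_phase (snd i)))
       (wave_s (mode_freq L (fst i)) (mode_phase (snd i)))
       (wave_c (mode_freq L (fst j)) (mode_phase (snd j)))
       (wave_s (mode_freq L (fst j)) (mode_phase (snd j))) = 0.
Proof.
  intros hL [k b] [k' b'] Hij; simpl. rewrite ip_waves. pose proof PI_RGT_0.
  destruct (Z.eq_dec k k') as [<- | Hk].
  - assert (Hb : b <> b') by congruence.
    rewrite (RInt_extR _ (fun _ => 0)), RInt_constR; [ring |].
    intros s. replace (mode_freq L k - mode_freq L k) with 0 by ring.
    destruct b, b'; try congruence; simpl;
      [replace (0 * s + (PI / 2 - 0)) with (PI / 2) by ring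
      | replace (0 * s + (0 - PI / 2)) with (- (PI / 2)) by ring; rewrite cos_neg];
      apply cos_PI2.
  - apply (RInt_cos_affine_period _ _ _ (k - k')).
    + unfold mode_freq. intros H0. apply Hk, eq_IZR.
      assert (IZR k - IZR k' = (2 * PI * IZR k / L - 2 * PI * IZR k' / L) * L / (2 * PI))
        as E by (field; lra).
      rewrite H0 in E. lra.
    + unfold mode_freq. rewrite minus_IZR. field. lra.
Qed.

Fixpoint modes (N : nat) : list (Z * bool) :=
  let k := Z.of_nat (S N) in
  (k, false) :: (k, true) :: ((- k)%Z, false) :: ((- k)%Z, true) ::
  match N with O => [] | S N' => modes N' end.

Lemma in_modes (N : nat) (k : Z) (b : bool) :
  In (k, b) (modes N) -> (1 <= Z.abs k <= Z.of_nat (S N))%Z.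
Proof.
  revert k b; induction N as [| N IH]; intros k b H; cbn [modes In] in H;
    repeat (destruct H as [H | H]; [injection H; intros; subst; lia |]);
    [contradiction | specialize (IH _ _ H); lia].
Qed.

Lemma NoDup_modes (N : nat) : NoDup (modes N).
Proof.
  induction N as [| N IH]; cbn [modes];
    repeat (apply NoDup_cons;
      [intros H; repeat (destruct H as [H | H]; [inversion H; lia |]);
       try (apply in_modes in H; lia); contradiction |]).
  - constructor.
  - exact IH.
Qed.

Lemma fold_modes (g : Z * bool -> R) (N : nat) :
  fold_right (fun i acc => g i + acc) 0 (modes N)
  = sum_f_R0 (fun j => g (Z.of_nat (S j), false) + g (Z.of_nat (S j), true)
      + g ((- Z.of_nat (S j))%Z, false) + g ((- Z.of_nat (S j))%Z, true)) N.
Proof.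
  induction N as [| N IH]; cbn [modes fold_right sum_f_R0]; [ring |].
  rewrite IH; ring.
Qed.

Section FourierCoefficients.

Variables (L : R) (f1 f2 : R -> R) (k : Z).
Hypotheses (hL : 0 < L) (cf1 : forall x, continuous f1 x) (cf2 : forall x, continuous f2 x).

Lemma fcoef_fhat_re : fcoef L f1 f2 (mode_freq L k) (mode_phase false) = sqrt L * fhat_re f1 f2 L k.
Proof.
  unfold fhat_re. rewrite Rint_RInt by solve_ex_RInt.
  rewrite <- Rmult_assoc, Rinv_r, Rmult_1_l by (apply Rgt_not_eq, sqrt_lt_R0, hL).
  apply RInt_extR; intros s. unfold wave_c, wave_s, mode_freq, mode_phase.
  replace (2 * PI * IZR k / L * s + 0) with (2 * PI * IZR k * s / L) by (field; lra). ring.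
Qed.

Lemma fcoef_fhat_im : fcoef L f1 f2 (mode_freq L k) (mode_phase true) = sqrt L * fhat_im f1 f2 L k.
Proof.
  unfold fhat_im. rewrite Rint_RInt by solve_ex_RInt.
  rewrite <- Rmult_assoc, Rinv_r, Rmult_1_l by (apply Rgt_not_eq, sqrt_lt_R0, hL).
  apply RInt_extR; intros s. unfold wave_c, wave_s, mode_freq, mode_phase.
  replace (2 * PI * IZR k / L * s + PI / 2) with (2 * PI * IZR k * s / L + PI / 2) by (field; lra).
  rewrite cos_plus_PI2, sin_plus_PI2. ring.
Qed.

End FourierCoefficients.

Lemma Itm1_partial_growing (f1 f2 : R -> R) (L n : R) : 0 < L -> Un_growing (Itm1_partial f1 f2 L n).
Proof.
  intros hL N. unfold Itm1_partial. rewrite tech5.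
  apply Rmult_le_compat_l.
  - pose proof PI_RGT_0. apply Rmult_le_pos; [nra |]. apply Rlt_le, Rinv_0_lt_compat, pow_lt, hL.
  - assert (forall k, 0 <= fhat_norm2 f1 f2 L k)
      by (intros; apply Rplus_le_le_0_compat; apply pow2_ge_0).
    cbv zeta. pose proof (pow2_ge_0 (IZR (Z.of_nat (S (S N))) - n)).
    pose proof (pow2_ge_0 (IZR (- Z.of_nat (S (S N))) - n)).
    pose proof (H (Z.of_nat (S (S N)))). pose proof (H (- Z.of_nat (S (S N)))%Z). nra.
Qed.

Lemma growing_bounded_cv (u : nat -> R) (a B : R) :
  0 < a -> Un_growing u -> (forall N, a * u N <= B) -> exists l, Un_cv u l /\ a * l <= B.
Proof.
  intros ha gu bu.
  assert (ub : forall N, u N <= B / a)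
    by (intros N; apply (Rmult_le_reg_l a); [exact ha |];
        replace (a * (B / a)) with B by (field; lra); apply bu).
  destruct (growing_cv u gu) as [l Hl]; [exists (B / a); intros x [N ->]; apply ub |].
  exists l; split; [exact Hl |].
  destruct (Rle_lt_dec l (B / a)) as [Hle | Hlt].
  - apply (Rmult_le_compat_l a) in Hle; [| lra].
    replace (a * (B / a)) with B in Hle by (field; lra). exact Hle.
  - destruct (Hl (l - B / a)) as [N HN]; [lra |].
    specialize (HN N (le_n N)). specialize (ub N). unfold R_dist in HN.
    apply Rabs_def2 in HN. lra.
Qed.

Section ClosedCurve.

Variables (L : R) (D1 D2 : nat -> R -> R).
Hypotheses (hL : 0 < L) (hs1 : smooth_derivs D1) (hs2 : smooth_derivs D2)
  (hper1 : forall s, D1 0%nat (s + L) = D1 0%nat s)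
  (hper2 : forall s, D2 0%nat (s + L) = D2 0%nat s)
  (harc : forall s, D1 1%nat s ^ 2 + D2 1%nat s ^ 2 = 1).

Lemma continuous_D1 (k : nat) (x : R) : continuous (D1 k) x.
Proof. apply continuous_smooth, hs1. Qed.

Lemma continuous_D2 (k : nat) (x : R) : continuous (D2 k) x.
Proof. apply continuous_smooth, hs2. Qed.

#[local] Hint Resolve continuous_D1 continuous_D2 : core.

(* The components of f'' - c nu, whose length is |kappa - c|. *)
Definition accel_shift1 (c s : R) : R := D1 2%nat s + c * D2 1%nat s.
Definition accel_shift2 (c s : R) : R := D2 2%nat s - c * D1 1%nat s.

Lemma velocity_orth_accel (x : R) : D1 1%nat x * D1 2%nat x + D2 1%nat x * D2 2%nat x = 0.
Proof.
  assert (H : is_derive (fun _ : R => 1) x (2 * (D1 1%nat x * D1 2%nat x + D2 1%nat x * D2 2%nat x))).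
  { apply (is_derive_ext (fun s => D1 1%nat s ^ 2 + D2 1%nat s ^ 2)); [exact harc |].
    auto_derive.
    - repeat split; eexists; apply is_derive_smooth; assumption.
    - rewrite !Derive_smooth by assumption. ring. }
  apply is_derive_unique in H. rewrite Derive_const in H. lra.
Qed.

Lemma accel_shift_norm2 (c s : R) :
  accel_shift1 c s ^ 2 + accel_shift2 c s ^ 2 = (curvature D1 D2 s - c) ^ 2.
Proof.
  pose proof (harc s) as A. pose proof (velocity_orth_accel s) as O.
  unfold accel_shift1, accel_shift2, curvature.
  assert (E : forall a1 a2 v1 v2 : R, (a1 + c * v2) ^ 2 + (a2 - c * v1) ^ 2
      - (a1 * - v2 + a2 * v1 - c) ^ 2
      = (a1 ^ 2 + a2 ^ 2) * (1 - (v1 ^ 2 + v2 ^ 2)) + (v1 * a1 + v2 * a2) ^ 2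
        + c ^ 2 * ((v1 ^ 2 + v2 ^ 2) - 1)) by (intros; ring).
  specialize (E (D1 2%nat s) (D2 2%nat s) (D1 1%nat s) (D2 1%nat s)).
  rewrite A, O in E. lra.
Qed.

Lemma fcoef_smooth_derive (j : nat) (w f : R) (k : Z) : w * L = 2 * IZR k * PI ->
  fcoef L (D1 (S j)) (D2 (S j)) w f = - w * fcoef L (D1 j) (D2 j) w (f + PI / 2).
Proof.
  intros hw. apply (fcoef_derive _ _ _ _ _ _ _ k); auto; try (intros; apply is_derive_smooth; assumption).
  - rewrite <- (Rplus_0_l L) at 1. apply (smooth_periodic D1 L hs1 hper1).
  - rewrite <- (Rplus_0_l L) at 1. apply (smooth_periodic D2 L hs2 hper2).
Qed.

Lemma fcoef_accel_shift (c w f : R) (k : Z) : w * L = 2 * IZR k * PI ->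
  fcoef L (accel_shift1 c) (accel_shift2 c) w f = (c * w - w ^ 2) * fcoef L (D1 0%nat) (D2 0%nat) w f.
Proof.
  intros hw.
  assert (Hsplit : fcoef L (accel_shift1 c) (accel_shift2 c) w f
      = fcoef L (D1 2%nat) (D2 2%nat) w f + c * fcoef L (D1 1%nat) (D2 1%nat) w (f + PI / 2)).
  { unfold fcoef, ip. rewrite <- RInt_plus_scal by solve_ex_RInt.
    apply RInt_extR; intros s. unfold accel_shift1, accel_shift2, wave_c, wave_s.
    replace (w * s + (f + PI / 2)) with (w * s + f + PI / 2) by ring.
    rewrite cos_plus_PI2, sin_plus_PI2. ring. }
  rewrite Hsplit, !(fcoef_smooth_derive _ _ _ k hw).
  replace (f + PI / 2 + PI / 2) with (f + PI) by field.
  rewrite fcoef_shift_PI by auto. ring.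
Qed.

Lemma mean_curvature : / L * Rint (curvature D1 D2) 0 L = 2 * PI * rot_number D1 D2 L / L.
Proof. unfold rot_number. pose proof PI_RGT_0. field. lra. Qed.

Lemma I0_accel_shift (c : R) : c = 2 * PI * rot_number D1 D2 L / L ->
  I0 D1 D2 L = L * ip L (accel_shift1 c) (accel_shift2 c) (accel_shift1 c) (accel_shift2 c).
Proof.
  intros ->. unfold I0. cbv zeta. rewrite mean_curvature, Rint_RInt.
  - f_equal. apply RInt_extR; intros s. rewrite <- accel_shift_norm2. ring.
  - unfold curvature; solve_ex_RInt.
Qed.

Lemma mode_bound (k : Z) : k <> 0%Z ->
  let n := rot_number D1 D2 L in
  let c := 2 * PI * n / L in
  4 * PI ^ 2 * (4 * PI ^ 2 / L ^ 3) * ((IZR k - n) ^ 2 * fhat_norm2 (D1 0%nat) (D2 0%nat) L k)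
  <= fcoef L (accel_shift1 c) (accel_shift2 c) (mode_freq L k) (mode_phase false) ^ 2
   + fcoef L (accel_shift1 c) (accel_shift2 c) (mode_freq L k) (mode_phase true) ^ 2.
Proof.
  intros Hk n c. pose proof PI_RGT_0.
  assert (hw : mode_freq L k * L = 2 * IZR k * PI) by (unfold mode_freq; field; lra).
  rewrite !(fcoef_accel_shift _ _ _ k hw), fcoef_fhat_re, fcoef_fhat_im by auto.
  assert (Hk2 : 1 <= IZR k ^ 2).
  { replace (IZR k ^ 2) with (IZR (k * k)) by (rewrite mult_IZR; ring). apply IZR_le. nia. }
  set (F := fhat_norm2 (D1 0%nat) (D2 0%nat) L k).
  set (A := c * mode_freq L k - mode_freq L k ^ 2).
  match goal with |- _ <= ?rhs => replace rhs with (A ^ 2 * sqrt L ^ 2 * F) by (unfold F, fhat_norm2; ring) end.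
  rewrite pow2_sqrt by lra.
  assert (E : A ^ 2 * L * F - 4 * PI ^ 2 * (4 * PI ^ 2 / L ^ 3) * ((IZR k - n) ^ 2 * F)
              = 16 * PI ^ 4 / L ^ 3 * (IZR k ^ 2 - 1) * ((IZR k - n) ^ 2 * F))
    by (unfold A, c, mode_freq; field; lra).
  assert (0 <= 16 * PI ^ 4 / L ^ 3) by (apply Rcomplements.Rdiv_le_0_compat; [nra | apply pow_lt, hL]).
  assert (0 <= (IZR k - n) ^ 2 * F)
    by (apply Rmult_le_pos; [apply pow2_ge_0 | unfold F, fhat_norm2; nra]).
  assert (0 <= 16 * PI ^ 4 / L ^ 3 * (IZR k ^ 2 - 1) * ((IZR k - n) ^ 2 * F))
    by (apply Rmult_le_pos; [apply Rmult_le_pos |]; lra).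
  lra.
Qed.

Lemma partial_sum_bound (N : nat) :
  4 * PI ^ 2 * Itm1_partial (D1 0%nat) (D2 0%nat) L (rot_number D1 D2 L) N <= I0 D1 D2 L.
Proof.
  set (c := 2 * PI * rot_number D1 D2 L / L).
  rewrite (I0_accel_shift c) by reflexivity.
  pose proof (bessel_inequality L (Z * bool) (fun i => mode_freq L (fst i))
    (fun i => mode_phase (snd i)) (accel_shift1 c) (accel_shift2 c) hL
    ltac:(intros; unfold accel_shift1; solve_continuous)
    ltac:(intros; unfold accel_shift2; solve_continuous)
    (modes_orthogonal L hL) (modes N) (NoDup_modes N)) as Hbessel.
  eapply Rle_trans; [| exact Hbessel].
  unfold sum_sq_coef, coef. rewrite fold_modes.
  unfold Itm1_partial. rewrite <- Rmult_assoc, scal_sum.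
  apply sum_Rle; intros j _. cbv zeta beta. cbn [fst snd].
  pose proof (mode_bound (Z.of_nat (S j)) ltac:(lia)) as Hpos.
  pose proof (mode_bound (- Z.of_nat (S j)) ltac:(lia)) as Hneg.
  cbv zeta in Hpos, Hneg. fold c in Hpos, Hneg. lra.
Qed.

End ClosedCurve.

Theorem mainTheorem7 (L : R) (D1 D2 : nat -> R -> R)
  (hL : 0 < L)
  (hs1 : smooth_derivs D1) (hs2 : smooth_derivs D2)
  (hper1 : forall s, D1 0%nat (s + L) = D1 0%nat s)
  (hper2 : forall s, D2 0%nat (s + L) = D2 0%nat s)
  (harc : forall s, D1 1%nat s ^ 2 + D2 1%nat s ^ 2 = 1)
  (hn : 1 <= rot_number D1 D2 L) :
  exists Itm1 : R,
    Un_cv (Itm1_partial (D1 0%nat) (D2 0%nat) L (rot_number D1 D2 L)) Itm1 /\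
    4 * PI ^ 2 * Itm1 <= I0 D1 D2 L.
Proof.
  apply growing_bounded_cv.
  - pose proof PI_RGT_0. nra.
  - apply Itm1_partial_growing, hL.
  - apply partial_sum_bound; assumption.
Qed.
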